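(* For every temporal oriented tree $\mathcal T$, the minimum cardinality of a temporal path cover of $\mathcal T$ equals the minimum cardinality of a clique cover of the connectivity graph $G$ of $\mathcal T$.
   Context: A temporal digraph is a pair $(D,\lambda)$ with $D=(V,A)$ a finite digraph and $\lambda:A\to 2^{\{1,\dots,t_{\max}\}}$ giving the time-steps at which each arc is active. A temporal oriented tree $\mathcal T=(T,\lambda)$ is one whose underlying digraph $T$ is an orientation of a tree. A temporal path is a sequence $(v_1,v_2,t_1),\dots,(v_{k-1},v_k,t_{k-1})$ with pairwise distinct $v_i$, $\overrightarrow{v_iv_{i+1}}\in A$, $t_i\in\lambda(\overrightarrow{v_iv_{i+1}})$ and $t_1<\dots<t_{k-1}$; a single vertex is also a temporal path. A temporal path cover is a collection of temporal paths whose vertex sets together contain $V$. Two vertices $u\ne v$ are temporally connected if there is a temporal path from $u$ to $v$ or from $v$ to $u$. The connectivity graph of $\mathcal T$ is the undirected graph $G$ with $V(G)=V(T)$ and $uv\in E(G)$ iff $u\neq v$ and $u,v$ are temporally connected. A clique cover of $G$ is a set of complete subgraphs of $G$ whose vertex sets cover $V(G)$. *)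

From mathcomp Require Import all_boot.
Set Implicit Arguments. Unset Strict Implicit. Unset Printing Implicit Defensive.

Section TemporalTrees.
Variable V : finType.

Definition undirected (a : rel V) : rel V := fun x y => a x y || a y x.

Definition is_tree (e : rel V) : Prop :=
  (forall x, ~~ e x x) /\ (forall x y, e x y = e y x) /\
  (forall x y, connect e x y) /\
  (forall c : seq V, uniq c -> 2 < size c -> ~~ cycle e c).

Definition oriented_tree (a : rel V) : Prop :=
  (forall x, ~~ a x x) /\ (forall x y, a x y -> ~~ a y x) /\
  is_tree (undirected a).

(* Labelling lam : V -> V -> nat -> bool, [lam x y t] means the arc xy is
   active at time t; a proper labelling assigns times in {1,...,tmax} to arcs
   only. *)
Definition labelling_ok (a : rel V) (tmax : nat) (lam : V -> V -> nat -> bool) :=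
  forall x y t, lam x y t -> a x y /\ 1 <= t <= tmax.

Definition temporal_path (a : rel V) (lam : V -> V -> nat -> bool) (p : seq V) : Prop :=
  exists x0 : V, exists ts : seq nat,
    [/\ p != [::], uniq p, size ts = (size p).-1, sorted ltn ts &
     forall i, i < (size p).-1 ->
       a (nth x0 p i) (nth x0 p i.+1) && lam (nth x0 p i) (nth x0 p i.+1) (nth 0 ts i)].

Definition temporal_path_cover (a : rel V) lam (P : seq (seq V)) : Prop :=
  uniq P /\ (forall p, p \in P -> temporal_path a lam p) /\
  (forall v : V, exists2 p, p \in P & v \in p).

Definition temporally_connected (a : rel V) lam (u v : V) : Prop :=
  u != v /\
  exists p, temporal_path a lam p /\
    ((head u p = u /\ last u p = v) \/ (head v p = v /\ last v p = u)).

Definition conn_clique (a : rel V) lam (K : {set V}) : Prop :=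
  forall u v, u \in K -> v \in K -> u != v -> temporally_connected a lam u v.

Definition conn_clique_cover (a : rel V) lam (C : {set {set V}}) : Prop :=
  (forall K, K \in C -> conn_clique a lam K) /\
  (forall v : V, exists2 K, K \in C & v \in K).

End TemporalTrees.

(* In an oriented tree a directed path is simple and is the only one between
   its ends: two different ones would close a cycle in the underlying tree.
   The vertices of a temporal path are pairwise temporally connected, so a
   temporal path cover yields a clique cover of the connectivity graph of no
   larger size.  Conversely every clique K lies on one temporal path: take a
   longest temporal path with both ends in K; a vertex z of K outside it is
   joined to both ends by temporal paths, and by uniqueness of tree paths these
   either extend the longest path, pass through z inside it, or close a cycle.
   So a clique cover yields a path cover of no larger size, and the minima
   coincide. *)

From Stdlib Require Import Classical.
From mathcomp Require Import all_boot zify.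
Set Implicit Arguments. Unset Strict Implicit. Unset Printing Implicit Defensive.

Lemma split_first_mem (T : eqType) (s1 s2 : seq T) :
  has (mem s2) s1 ->
  exists a1 w b1, [/\ s1 = a1 ++ w :: b1, w \in s2 & ~~ has (mem s2) a1].
Proof.
elim: s1 => [|y t IH] //=; case: (boolP (y \in s2)) => [ys2 _|ys2 /= ht].
  by exists [::], y, t.
have [a1 [w [b1 [-> ws2 a1s2]]]] := IH ht.
by exists (y :: a1), w, b1; rewrite /= (negbTE ys2).
Qed.

Lemma classical_ex_min (P : nat -> Prop) :
  (exists n, P n) -> exists n, P n /\ forall m, P m -> n <= m.
Proof.
case=> n; elim/ltn_ind: n => n IH Pn.
have [[m [Pm lt_mn]]|noP] := classic (exists m, P m /\ m < n); first exact: IH Pm.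
by exists n; split=> // m Pm; rewrite leqNgt; apply/negP=> lt_mn; apply: noP; exists m.
Qed.

Lemma classical_ex_max (P : nat -> Prop) b :
  (exists n, P n) -> (forall n, P n -> n <= b) ->
  exists n, P n /\ forall m, P m -> m <= n.
Proof.
move=> [n Pn] le_b; pose Q d := exists2 m, P m & d = b - m.
have [|_ [[m Pm ->] min_m]] := classical_ex_min (P := Q); first by exists (b - n), n.
exists m; split=> // k Pk; have := min_m _ (ex_intro2 _ _ k Pk erefl).
by have := le_b _ Pm; have := le_b _ Pk; lia.
Qed.

Section Forest.
Variables (V : finType) (e : rel V).
Hypothesis e_sym : symmetric e.
Hypothesis e_acyclic : forall c : seq V, uniq c -> 2 < size c -> ~~ cycle e c.

(* Otherwise [x :: a1 ++ w :: rev a2] is a cycle. *)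
Lemma forest_disjoint_paths x w a1 a2 :
  path e x (rcons a1 w) -> path e x (rcons a2 w) ->
  uniq (x :: rcons a1 w) -> uniq (x :: rcons a2 w) -> ~~ has (mem a2) a1 ->
  a1 = [::] /\ a2 = [::].
Proof.
move=> p1 p2 u1 u2 a12.
suff /norP[/negPn/eqP-> /negPn/eqP->] : ~~ ((a1 != [::]) || (a2 != [::])) by [].
apply/negP=> a12n; apply: (negP (e_acyclic (c := x :: rcons a1 w ++ rev a2) _ _)).
- move: u1 u2 a12; rewrite /= !mem_cat !mem_rcons !inE !rcons_uniq !cat_uniq.
  rewrite mem_rev rev_uniq has_rev has_sym has_rcons rcons_uniq !negb_or.
  case/and3P=> /andP[-> ->] -> -> /and3P[/andP[_ ->] -> ->] a12 /=.
  by rewrite !andbT.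
- by rewrite /= size_cat size_rcons size_rev; case: a1 a2 a12n {p1 p2 u1 u2 a12} => [|? ?] [|? ?].
- rewrite /= rcons_cat -rev_cons cat_path p1 last_rcons /=.
  rewrite -(belast_rcons x a2 w) -[w in path e w](last_rcons x a2) rev_path.
  by rewrite (eq_path (e' := e)) // => u v; apply: e_sym.
Qed.

Lemma forest_path_unique x s1 s2 :
  path e x s1 -> path e x s2 -> uniq (x :: s1) -> uniq (x :: s2) ->
  last x s1 = last x s2 -> s1 = s2.
Proof.
elim: s1 x s2 => [|y1 t1 IH] x [|y2 t2] // p1 p2 u1 u2 /= l12.
- by move: u2; rewrite /= l12 mem_last.
- by move: u1; rewrite /= -l12 mem_last.
have [ey|y12] := eqVneq y1 y2.
  subst y2; case/andP: p1 => _ p1; case/andP: p2 => _ p2.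
  by case/andP: u1 => _ u1; case/andP: u2 => _ u2; rewrite (IH y1 t2).
have : has (mem (y2 :: t2)) (y1 :: t1).
  by apply/hasP; exists (last y1 t1); rewrite ?mem_last //= l12 mem_last.
case/split_first_mem=> a1 [w [b1 [def1 w2 a12]]].
case/splitPr def2 : (y2 :: t2) / w2 => [a2 b2] in a12 p2 u2 *.
rewrite def1 in p1 u1.
move: p1 p2 u1 u2; rewrite -!cat_cons -!cat_rcons !cat_path !cat_uniq.
case/andP=> p1 _ /andP[p2 _] /andP[u1 _] /andP[u2 _].
have a12' : ~~ has (mem a2) a1.
  by apply: contra a12; apply: sub_has => v /= va2; rewrite mem_cat va2.
have [a1_0 a2_0] := forest_disjoint_paths p1 p2 u1 u2 a12'.
by move: def1 def2 y12; rewrite a1_0 a2_0 => -[-> _] [-> _]; rewrite eqxx.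
Qed.
End Forest.

Section TemporalPaths.
Variables (V : finType) (a : rel V) (lam : V -> V -> nat -> bool).

Definition temporal_reach (u v : V) : Prop :=
  exists s, temporal_path a lam (u :: s) /\ last u s = v.

Lemma temporal_path1 v : temporal_path a lam [:: v].
Proof. by exists v, [::]. Qed.

Lemma temporal_path_path x s : temporal_path a lam (x :: s) -> path a x s.
Proof.
case=> x0 [ts [_ _ _ _ tsP]]; apply/(pathP x0) => i lt_i_s.
by case/andP: (tsP i lt_i_s).
Qed.

Lemma temporal_path_size p : temporal_path a lam p -> size p <= #|V|.
Proof. by case=> _ [_ [_ /card_uniqP <- _ _ _]]; apply: max_card. Qed.

Lemma temporal_path_slice p i j :
  temporal_path a lam p -> i <= j < size p ->
  temporal_path a lam (drop i (take j.+1 p)).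
Proof.
case=> x0 [ts [_ up sz_ts ts_lt tsP]] /andP[le_ij lt_jp].
have sz : size (drop i (take j.+1 p)) = (j - i).+1.
  by rewrite size_drop size_take; case: ltnP; lia.
exists x0, (drop i (take j ts)); split.
- by rewrite -size_eq0 sz.
- exact/drop_uniq/take_uniq.
- by rewrite sz size_drop size_take sz_ts; case: ltnP; lia.
- apply: (subseq_sorted ltn_trans _ ts_lt).
  exact: (subseq_trans (drop_subseq _ _) (take_subseq _ _)).
- move=> k; rewrite sz /= => lt_k.
  rewrite !nth_drop !nth_take; try lia.
  by rewrite addnS; apply: tsP; lia.
Qed.

Lemma temporal_path_reach p u v :
  temporal_path a lam p -> u \in p -> v \in p -> index u p <= index v p ->
  temporal_reach u v.
Proof.
move=> tp up vp le_uv; have lt_vp : index v p < size p by rewrite index_mem.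
set q := drop (index u p) (take (index v p).+1 p).
have tpq : temporal_path a lam q by apply: temporal_path_slice => //; apply/andP.
have sz : size q = (index v p - index u p).+1.
  by rewrite size_drop size_take; case: ltnP; lia.
have nthq k : k <= index v p - index u p -> nth u q k = nth u p (index u p + k).
  by move=> le_k; rewrite /q nth_drop nth_take //; lia.
case def : q sz tpq nthq => [//|w s] [sz] tpq nthq; exists s.
have uw : w = u by move: (nthq 0 isT); rewrite addn0 nth_index.
rewrite -uw; split => //.
by rewrite -(last_cons u) -nth_last /= sz nthq // subnKC // nth_index.
Qed.

Lemma temporally_connectedP u v :
  temporally_connected a lam u v <->
  u != v /\ (temporal_reach u v \/ temporal_reach v u).
Proof.
split=> [[uv [p [tp ends]]] | [uv [[s [tp l]]|[s [tp l]]]]].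
- split=> //; case: p tp ends => [|w s]; first by case=> ? [? []].
  by move=> tp [[/= wu l]|[/= wv l]]; [left | right]; exists s; subst w.
- by split=> //; exists (u :: s); split; last by left.
- by split=> //; exists (v :: s); split; last by right.
Qed.

Lemma temporal_path_connected p u v :
  temporal_path a lam p -> u \in p -> v \in p -> u != v ->
  temporally_connected a lam u v.
Proof.
move=> tp up vp uv; apply/temporally_connectedP; split => //.
case: (leqP (index u p) (index v p)) => [le_uv|/ltnW le_vu].
  by left; apply: temporal_path_reach tp up vp le_uv.
by right; apply: temporal_path_reach tp vp up le_vu.
Qed.

Lemma temporal_path_cover_singletons :
  temporal_path_cover a lam [seq [:: v] | v <- enum V].
Proof.
split; last split.
- by rewrite map_inj_uniq ?enum_uniq // => u v [].
- by move=> p /mapP[v _ ->]; apply: temporal_path1.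
- by move=> v; exists [:: v]; rewrite ?mem_head // map_f ?mem_enum.
Qed.

Lemma clique_cover_of_path_cover P :
  temporal_path_cover a lam P ->
  exists2 C, conn_clique_cover a lam C & #|C| <= size P.
Proof.
case=> _ [tpP covP]; exists [set K in [seq [set v in p] | p <- P]].
  split=> [K | v].
    rewrite inE => /mapP[p pP ->] u v; rewrite !inE.
    exact: temporal_path_connected (tpP p pP).
  have [p pP vp] := covP v; exists [set v in p]; last by rewrite inE.
  by rewrite inE map_f.
by rewrite cardsE (leq_trans (card_size _)) ?size_map.
Qed.

End TemporalPaths.

Section OrientedTree.
Variables (V : finType) (a : rel V).
Hypothesis a_tree : oriented_tree a.

Lemma undirected_path x s : path a x s -> path (undirected a) x s.
Proof. by apply: sub_path => u v; rewrite /undirected => ->. Qed.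

Lemma oriented_tree_path_uniq x s : path a x s -> uniq (x :: s).
Proof.
have [a_irr [a_asym [_ [u_sym [_ u_acyc]]]]] := a_tree.
elim: s x => [//|y t IH] x; rewrite [path _ _ _]/= => /andP[axy pyt].
have uyt := IH y pyt; rewrite cons_uniq uyt andbT inE negb_or.
have yx : y != x by apply: contraTneq axy => ->; apply: a_irr.
rewrite eq_sym yx /=; apply/negP=> xt.
case/splitPr: xt pyt uyt => t1 t2.
rewrite -cat_rcons cat_path -cat_cons cat_uniq => /andP[pyx _] /andP[uyx _].
have uyx' : uniq [:: y; x] by rewrite /= inE yx.
have pyx' : path (undirected a) y [:: x] by rewrite /= /undirected axy orbT.
have := forest_path_unique u_sym u_acyc (undirected_path pyx) pyx' uyx uyx'.
rewrite last_rcons => /(_ erefl).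
case: t1 {uyx} pyx => [|? [|? ?]] //= /andP[ayx _] _.
by move: (a_asym _ _ axy); rewrite ayx.
Qed.

Lemma oriented_tree_path_unique x s1 s2 :
  path a x s1 -> path a x s2 -> last x s1 = last x s2 -> s1 = s2.
Proof.
have [_ [_ [_ [u_sym [_ u_acyc]]]]] := a_tree.
move=> p1 p2; apply: (forest_path_unique u_sym u_acyc); rewrite ?undirected_path //.
all: exact: oriented_tree_path_uniq.
Qed.

Variable lam : V -> V -> nat -> bool.

Lemma longest_clique_path_covers K x s :
  conn_clique a lam K -> temporal_path a lam (x :: s) ->
  x \in K -> last x s \in K ->
  (forall y t, temporal_path a lam (y :: t) -> y \in K -> last y t \in K ->
     size t <= size s) ->
  {subset K <= x :: s}.
Proof.
move=> clK tp xK yK s_max z zK; apply/negPn/negP=> zNs.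
have ps := temporal_path_path tp.
have xz : x != z by apply: contraNneq zNs => <-; apply: mem_head.
have yz : last x s != z by apply: contraNneq zNs => <-; apply: mem_last.
have nonnil (y : V) t : last y t != y -> size t > 0 by case: t => //=; rewrite eqxx.
(* Writing y for the last vertex, the cases are: x -> z with y -> z (z beyond
   y), x -> z -> y (z on the path), z -> x -> y -> z (a cycle), and z -> x with
   z -> y (z before x). *)
have /temporally_connectedP[_ [[s1 [t1 l1]]|[s1 [t1 l1]]]] := clK _ _ xK zK xz;
have /temporally_connectedP[_ [[s2 [t2 l2]]|[s2 [t2 l2]]]] := clK _ _ yK zK yz;
have p1 := temporal_path_path t1; have p2 := temporal_path_path t2.
- have s1E : s1 = s ++ s2.
    by apply: (oriented_tree_path_unique p1); rewrite ?cat_path ?ps ?last_cat ?l1 ?l2.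
  have := s_max _ _ t1 xK; rewrite l1 s1E size_cat => /(_ zK).
  by have := nonnil (last x s) s2; rewrite l2 eq_sym => /(_ yz); lia.
- have sE : s = s1 ++ s2.
    by apply: esym (oriented_tree_path_unique _ ps _); rewrite ?cat_path ?p1 ?l1 ?last_cat ?l1.
  by move: zNs; rewrite sE -cat_cons mem_cat -l1 mem_last.
- have loop : path a z (s1 ++ s ++ s2) by rewrite !cat_path p1 l1 ps p2.
  have := oriented_tree_path_uniq loop; rewrite cons_uniq => /andP[/negP[]].
  have := nonnil (last x s) s2; rewrite l2 eq_sym => /(_ yz).
  case: s2 l2 {t2 p2 loop} => [//|w s2] /= <- _.
  by rewrite !mem_cat mem_last !orbT.
- have s2E : s2 = s1 ++ s.
    by apply: (oriented_tree_path_unique p2); rewrite ?cat_path ?p1 ?l1 ?ps ?last_cat ?l1.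
  have := s_max _ _ t2 zK; rewrite l2 s2E size_cat => /(_ yK).
  by have := nonnil z s1; rewrite l1 => /(_ xz); lia.
Qed.

Lemma conn_clique_on_temporal_path K x :
  conn_clique a lam K -> x \in K ->
  exists2 p, temporal_path a lam p & {subset K <= p}.
Proof.
move=> clK xK.
pose spans_clique n := exists y t, [/\ temporal_path a lam (y :: t),
  y \in K, last y t \in K & size t = n].
have [|n|n [[y [t [tp yK tK <-]]] t_max]] := classical_ex_max (b := #|V|) (P := spans_clique).
- by exists 0, x, [::]; split=> //; apply: temporal_path1.
- by case=> y [t [/temporal_path_size /= le_tV _ _ <-]]; apply: ltnW.
exists (y :: t) => //; apply: longest_clique_path_covers => // y' t' tp' y'K t'K.
by apply: t_max; exists y', t'.
Qed.

Lemma temporal_paths_of_cliques (Ks : seq {set V}) :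
  (forall K, K \in Ks -> conn_clique a lam K) ->
  exists P, [/\ forall p, p \in P -> temporal_path a lam p, size P <= size Ks &
    forall K v, K \in Ks -> v \in K -> exists2 p, p \in P & v \in p].
Proof.
elim: Ks => [_|K Ks IH clKs]; first by exists [::]; split.
have [|P [tpP szP covP]] := IH; first by move=> K' K'Ks; apply: clKs; rewrite inE K'Ks orbT.
have [K0|[x xK]] := set_0Vmem K.
  exists P; split=> [//||K' v]; first exact: leqW.
  by case/predU1P=> [->|/covP]; rewrite ?K0 ?inE // => covK /covK.
have [p tp Kp] := conn_clique_on_temporal_path (clKs K (mem_head _ _)) xK.
exists (p :: P); split=> [q /predU1P[->|/tpP]//|//|K' v /predU1P[->|K'Ks] vK'].
  by exists p; rewrite ?mem_head ?Kp.
by have [q qP vq] := covP _ _ K'Ks vK'; exists q; rewrite // inE qP orbT.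
Qed.

Lemma path_cover_of_clique_cover C :
  conn_clique_cover a lam C ->
  exists2 P, temporal_path_cover a lam P & size P <= #|C|.
Proof.
case=> clC covC; have [|P [tpP szP covP]] := @temporal_paths_of_cliques (enum C).
  by move=> K; rewrite mem_enum; apply: clC.
exists (undup P); last by rewrite cardE (leq_trans (size_undup P)).
split; [exact: undup_uniq | split=> [p|v]; first by rewrite mem_undup; apply: tpP].
have [K KC vK] := covC v; rewrite -mem_enum in KC; have [p pP vp] := covP K v KC vK.
by exists p; rewrite ?mem_undup.
Qed.

End OrientedTree.

Theorem mainTheorem5 (V : finType) (a : rel V) (tmax : nat)
    (lam : V -> V -> nat -> bool) :
  oriented_tree a -> labelling_ok a tmax lam ->
  exists k : nat,
    ((exists2 P, temporal_path_cover a lam P & size P = k) /\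
     (forall P, temporal_path_cover a lam P -> k <= size P)) /\
    ((exists2 C, conn_clique_cover a lam C & #|C| = k) /\
     (forall C, conn_clique_cover a lam C -> k <= #|C|)).
Proof.
move=> a_tree _.
have [|k [[P Pcov <-] P_min]] := classical_ex_min
  (P := fun k => exists2 P, temporal_path_cover a lam P & size P = k).
  exists #|V|, [seq [:: v] | v <- enum V]; last by rewrite size_map cardE.
  exact: temporal_path_cover_singletons.
have C_ge C : conn_clique_cover a lam C -> size P <= #|C|.
  case/(path_cover_of_clique_cover a_tree)=> P' P'cov.
  by apply: leq_trans; apply: P_min; exists P'.
have [C Ccov le_CP] := clique_cover_of_path_cover Pcov.
exists (size P); split; split=> //.
- by exists P.
- by move=> P' P'cov; apply: P_min; exists P'.
- by exists C => //; apply/eqP; rewrite eqn_leq le_CP C_ge.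
Qed.
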